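(* Let $(X,T)$ be a minimal topological dynamical system ($X$ compact metrisable, $T$ a group acting by homeomorphisms) with maximal equicontinuous factor map $\pi:X\to X_{max}$, let $e$ be a minimal idempotent of its Ellis semigroup, and let $\xi\in X_{max}$. The proximal relation restricted to $\pi^{-1}(\xi)$ is transitive if and only if every element of the little structure group $\Gamma_e$ fixes every point of $e(\pi^{-1}(\xi))$. In particular, the proximal relation on $X$ is transitive if and only if $\Gamma_e=\{e\}$.
   Context: The Ellis semigroup $E$ is the closure of $\{\alpha^t:t\in T\}$ in $X^X$ (pointwise convergence topology, composition as product); it has a smallest two-sided ideal $\ker E$. Minimal idempotents are the idempotents of $\ker E$; $J_{min}$ denotes the set of them. For a minimal idempotent $e$, the structure group is ${\mathcal H}_e=eEe$ (a group with identity $e$), and the little structure group $\Gamma_e$ is the subgroup of ${\mathcal H}_e$ generated by $eJ_{min}e=\{epe:p\in J_{min}\}$. Points $x,y$ are proximal if $\inf_{t} d(\alpha^t(x),\alpha^t(y))=0$ for a compatible metric $d$. *)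

From HB Require Import structures.
From mathcomp Require Import all_boot all_order all_algebra.
From mathcomp Require Import all_classical all_reals all_analysis.
Set Implicit Arguments. Unset Strict Implicit. Unset Printing Implicit Defensive.
Import Order.TTheory GRing.Theory Num.Theory.
Local Open Scope classical_set_scope.
Local Open Scope ring_scope.

(* A (left) action of the group T on the topological space X by homeomorphisms:
   alpha 1 = id, alpha (s*t) = alpha s o alpha t, every alpha t continuous
   (hence a homeomorphism with inverse alpha t^-1). *)
Definition tds_action (T : groupType) (X : topologicalType) (alpha : T -> X -> X) :=
  [/\ (forall x, alpha 1%g x = x),
      (forall s t x, alpha (s * t)%g x = alpha s (alpha t x)) &
      (forall t, continuous (alpha t))].

Definition orbit (T : groupType) (X : Type) (alpha : T -> X -> X) (x : X) : set X :=
  [set alpha t x | t in [set: T]].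

Definition minimal_system (T : groupType) (X : topologicalType) (alpha : T -> X -> X) :=
  forall x, closure (orbit alpha x) = [set: X].

Definition factor_map (T : groupType) (X Y : topologicalType)
  (alpha : T -> X -> X) (beta : T -> Y -> Y) (pi : X -> Y) :=
  [/\ continuous pi, pi @` [set: X] = [set: Y] &
      (forall t x, pi (alpha t x) = beta t (pi x))].

Definition equicontinuous_system (R : realType) (T : groupType)
  (Y : pseudoMetricType R) (beta : T -> Y -> Y) :=
  forall eps : R, 0 < eps -> exists2 delta : R, 0 < delta &
    forall y y' t, ball y delta y' -> ball (beta t y) eps (beta t y').

Definition compact_metric_equicontinuous (R : realType) (T : groupType)
  (Y : pseudoMetricType R) (beta : T -> Y -> Y) :=
  [/\ compact [set: Y], hausdorff_space Y, tds_action beta &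
      equicontinuous_system beta].

Definition is_max_equicontinuous_factor (R : realType) (T : groupType)
  (X Y : pseudoMetricType R) (alpha : T -> X -> X) (beta : T -> Y -> Y)
  (pi : X -> Y) :=
  [/\ compact_metric_equicontinuous beta, factor_map alpha beta pi &
      forall (Z : pseudoMetricType R) (gamma : T -> Z -> Z) (rho : X -> Z),
        compact_metric_equicontinuous gamma -> factor_map alpha gamma rho ->
        exists psi : Y -> Z, factor_map beta gamma psi /\
                             forall x, rho x = psi (pi x)].

Definition ellis (T : groupType) (X : topologicalType) (alpha : T -> X -> X)
  : set (X -> X) :=
  @closure {ptws X -> X} [set f : {ptws X -> X} | exists t, f = alpha t].

Definition two_sided_ideal (X : Type) (E I : set (X -> X)) :=
  [/\ I `<=` E, I !=set0 &
      forall p q, E p -> I q -> I (p \o q) /\ I (q \o p)].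

Definition ker_ellis (T : groupType) (X : topologicalType) (alpha : T -> X -> X)
  : set (X -> X) :=
  [set p | forall I, two_sided_ideal (ellis alpha) I -> I p].

Definition Jmin (T : groupType) (X : topologicalType) (alpha : T -> X -> X)
  : set (X -> X) :=
  [set p | ker_ellis alpha p /\ p \o p = p].

Definition structure_group (T : groupType) (X : topologicalType)
  (alpha : T -> X -> X) (e : X -> X) : set (X -> X) :=
  [set e \o p \o e | p in ellis alpha].

(* little structure group: subgroup of H_e generated by e J_min e,
   i.e. the smallest subset of H_e containing e J_min e and closed under
   products and inverses (taken in the group H_e with identity e) *)
Definition little_structure_group (T : groupType) (X : topologicalType)
  (alpha : T -> X -> X) (e : X -> X) : set (X -> X) :=
  [set g | forall S : set (X -> X),
     S `<=` structure_group alpha e ->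
     (forall p, Jmin alpha p -> S (e \o p \o e)) ->
     (forall g1 g2, S g1 -> S g2 -> S (g1 \o g2)) ->
     (forall g1 h, S g1 -> structure_group alpha e h ->
        g1 \o h = e -> h \o g1 = e -> S h) ->
     S g].

Definition proximal (R : realType) (T : groupType) (X : pseudoMetricType R)
  (alpha : T -> X -> X) (x y : X) :=
  forall eps : R, 0 < eps -> exists t, ball (alpha t x) eps (alpha t y).

(* Proximality is read off the Ellis semigroup E: x and y are proximal iff
   p x = p y for some p in E, and an equicontinuous factor identifies such
   points, so proximal pairs stay in a fibre. Distinct points of the range of
   the minimal idempotent e are never proximal, because e E e is a group.
   Hence, if proximality is transitive on a fibre, every generator e u e of
   Gamma_e moves e x to a proximal point of the fibre, then so does every
   element of Gamma_e by induction, and it must fix e x. Conversely a proximal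
   pair x, y is identified by a minimal idempotent u, and minimality gives
   e (u x) = c (e x) with c in Gamma_e; when Gamma_e fixes the fibre this
   makes proximality on the fibre the relation e x = e y. *)

From Pilot Require Import Defs.
From HB Require Import structures.
From mathcomp Require Import all_boot all_order all_algebra.
From mathcomp Require Import all_classical all_reals all_analysis.
Unset Printing Implicit Defensive.
Import Order.TTheory GRing.Theory Num.Theory.
Local Open Scope classical_set_scope.
Local Open Scope ring_scope.

Section PointwiseTopology.
Context {X : topologicalType}.
Local Notation F := {ptws X -> X}.

Lemma eval_continuous (x : X) : continuous (fun f : F => f x).
Proof. exact: (@proj_continuous X (fun _ => X) x). Qed.

Lemma continuous_ptws (Z : topologicalType) (G : Z -> F) :
  (forall x, continuous (fun z => G z x)) -> continuous G.
Proof.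
move=> h z; apply/cvg_sup => x.
by apply: (@continuous_comp_initial _ _ _ (fun f : X -> X => f x)); exact: h.
Qed.

Lemma continuous_ptws_rcomp (q : X -> X) : continuous (fun f : F => (f \o q : F)).
Proof. by apply: continuous_ptws => x; exact: eval_continuous. Qed.

Lemma continuous_ptws_lcomp (q : X -> X) :
  continuous q -> continuous (fun f : F => (q \o f : F)).
Proof.
move=> qc; apply: continuous_ptws => x f.
exact: (@continuous_comp F X X (fun f : F => f x) q f (eval_continuous x f) (qc _)).
Qed.

Lemma nbhs_ptws_eval (Y : topologicalType) (g : X -> Y) (p : F) (x : X) (B : set Y) :
  continuous g -> nbhs (g (p x)) B -> nbhs p [set f : F | B (g (f x))].
Proof. by move=> gc hB; exact: (eval_continuous x p _ (gc (p x) _ hB)). Qed.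

Lemma ptws_hausdorff : hausdorff_space X -> hausdorff_space F.
Proof. by move=> h; apply: (@hausdorff_product X (fun _ => X)). Qed.

Lemma ptws_compact : compact [set: X] -> compact [set: F].
Proof.
move=> Xcpt; have := @tychonoff X (fun _ => X) (fun _ => setT) (fun _ => Xcpt).
by congr compact; rewrite predeqE.
Qed.

End PointwiseTopology.

Lemma nbhs_ptws_ball {R : realType} {X : pseudoMetricType R} (p : {ptws X -> X})
    (x : X) (eps : R) :
  0 < eps -> nbhs p [set f : {ptws X -> X} | ball (p x) eps (f x)].
Proof.
move=> e0; have := @nbhs_ptws_eval X X id p x (ball (p x) eps).
by apply; [move=> ?; exact: cvg_id | exact: nbhsx_ballx].
Qed.

Lemma hausdorff_ball_eq {R : realType} {Y : pseudoMetricType R} (x y : Y) :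
  hausdorff_space Y -> (forall eps : R, 0 < eps -> ball x eps y) -> x = y.
Proof. by move=> Ysep h; apply: close_eq => //; rewrite ball_close => eps; exact: h. Qed.

Lemma proximal_sym {R : realType} {T : groupType} {X : pseudoMetricType R}
    (alpha : T -> X -> X) (x y : X) :
  proximal alpha x y -> proximal alpha y x.
Proof. by move=> h eps e0; have [t ht] := h eps e0; exists t; exact: ball_sym. Qed.

Section EllisSemigroup.
Context {R : realType} {T : groupType} {X : pseudoMetricType R} {alpha : T -> X -> X}.
Hypotheses (Xcpt : compact [set: X]) (Xsep : hausdorff_space X) (Xact : tds_action alpha).
Local Notation F := {ptws X -> X}.
Local Notation E := (ellis alpha).

Lemma ellis_act t : E (alpha t).
Proof. by apply: (@subset_closure F); exists t. Qed.

Lemma ellis_closed : closed (E : set F).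
Proof. exact: closed_closure. Qed.

Lemma ellis_compact : compact (E : set F).
Proof.
apply: (@subclosed_compact F _ setT) => //; first exact: ellis_closed.
exact: ptws_compact.
Qed.

Lemma ellis_id : E id.
Proof.
have := ellis_act 1%g; case: Xact => act1 _ _.
by congr E; apply: funext => x; rewrite act1.
Qed.

Lemma ellis_act_comp t (p : X -> X) : E p -> E (alpha t \o p).
Proof.
case: Xact => _ actM act_cont Ep B hB.
have := Ep _ (continuous_ptws_lcomp _ (act_cont t) p _ hB) => -[_ [[s ->] /= hs]].
exists (alpha t \o alpha s); split => //; exists (t * s)%g.
by apply: funext => x; rewrite actM.
Qed.

Lemma ellis_comp {p q : X -> X} : E p -> E q -> E (p \o q).
Proof.
move=> Ep Eq; apply: ellis_closed => B hB.
have := Ep _ (continuous_ptws_rcomp q p _ hB) => -[_ [[s ->] /= hs]].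
by exists (alpha s \o q); split => //; exact: ellis_act_comp.
Qed.

Lemma ellis_cluster (P : R -> T -> Prop) :
  (forall e1 e2 t, e1 <= e2 -> P e1 t -> P e2 t) ->
  (forall eps, 0 < eps -> exists t, P eps t) ->
  exists2 p : X -> X, E p & forall eps, 0 < eps -> forall N : set F,
     nbhs (p : F) N -> exists t, P eps t /\ N (alpha t).
Proof.
move=> Pmono Pne.
pose G := filter_from [set eps : R | 0 < eps]
  (fun eps => [set f : F | exists2 t, P eps t & f = alpha t]).
have GF : Filter G.
  apply: filter_from_filter; first by exists 1; rewrite /= ltr01.
  move=> i j /= i0 j0; exists (Num.min i j) => /=; first by rewrite lt_min i0.
  move=> f [t Pt ->]; split; exists t => //; apply: (Pmono (Num.min i j)) => //;
    by rewrite ge_min lexx ?orbT.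
have GP : ProperFilter G.
  apply: filter_from_proper => // eps /= e0.
  by have [t Pt] := Pne _ e0; exists (alpha t); exists t.
have GE : G E by exists 1; [rewrite /= ltr01 | move=> f [t _ ->]; exact: ellis_act].
have [p [Ep clp]] := ellis_compact _ GP GE.
exists p => // eps e0 N hN.
have GA : G [set f : F | exists2 t, P eps t & f = alpha t] by exists eps.
by have [_ [[t Pt ->] Nt]] := clp _ _ GA hN; exists t.
Qed.

Lemma proximalP x y : proximal alpha x y <-> exists2 p, E p & p x = p y.
Proof.
split=> [hp|[p Ep pxy] eps e0]; last first.
  have e2 : 0 < eps / 2 by rewrite divr_gt0.
  have N : nbhs (p : F) ([set f : F | ball (p x) (eps/2) (f x)] `&`
                         [set f : F | ball (p y) (eps/2) (f y)]).
    by apply: filterI; apply: nbhs_ptws_ball.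
  have [_ [[t ->] [h1 h2]]] := Ep _ N.
  exists t; apply: (@ball_splitl _ _ (p x)); first exact: ball_sym.
  by rewrite pxy; exact: ball_sym.
have [p Ep hN] := @ellis_cluster (fun eps t => ball (alpha t x) eps (alpha t y))
  (fun e1 e2 t le12 => @le_ball _ _ _ _ _ le12 _) hp.
exists p => //; apply: hausdorff_ball_eq => // eps e0.
have e2 : 0 < eps / 2 by rewrite divr_gt0.
have e4 : 0 < eps / 2 / 2 by rewrite !divr_gt0.
have N : nbhs (p : F) ([set f : F | ball (p x) (eps/2) (f x)] `&`
                       [set f : F | ball (p y) (eps/2/2) (f y)]).
  by apply: filterI; apply: nbhs_ptws_ball.
have [t [Pt [h1 h2]]] := hN _ e4 _ N.
apply: (@ball_split _ _ (alpha t x)) => //.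
by apply: (@ball_split _ _ (alpha t y)) => //; exact: ball_sym.
Qed.

Lemma minimal_ellis_onto : minimal_system alpha -> forall x0 x : X,
  exists2 p, E p & p x0 = x.
Proof.
move=> hmin x0 x.
have near_orbit eps : 0 < eps -> exists t, ball x eps (alpha t x0).
  move=> e0; have clx : closure (Defs.orbit alpha x0) x by rewrite hmin.
  by have [_ [[t _ <-] h]] := clx _ (nbhsx_ballx x _ e0); exists t.
have [p Ep hN] := @ellis_cluster (fun eps t => ball x eps (alpha t x0))
  (fun e1 e2 t le12 => @le_ball _ _ _ _ _ le12 _) near_orbit.
exists p => //; apply: hausdorff_ball_eq => // eps e0.
have e2 : 0 < eps / 2 by rewrite divr_gt0.
have [t [Pt h1]] := hN _ e2 _ (nbhs_ptws_ball p x0 _ e2).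
exact: (@ball_splitl _ _ (alpha t x0)).
Qed.

Definition left_ideal (L : set (X -> X)) :=
  [/\ L `<=` E, L !=set0 & forall q l, E q -> L l -> L (q \o l)].

Lemma left_ideal_ellis_rcomp (l : X -> X) : E l -> left_ideal [set q \o l | q in E].
Proof.
move=> El; split.
- by move=> _ [q Eq <-]; exact: ellis_comp.
- by exists l; exists id => //; exact: ellis_id.
- by move=> q _ Eq [q' Eq' <-]; exists (q \o q') => //; exact: ellis_comp.
Qed.

Lemma closed_ellis_rcomp (l : X -> X) : closed ([set q \o l | q in E] : set F).
Proof.
apply: compact_closed; first exact: ptws_hausdorff.
apply: (continuous_compact _ ellis_compact).
exact/continuous_subspaceT/continuous_ptws_rcomp.
Qed.

Lemma left_ideal_chain_bigcap (A : set (set (X -> X))) : A !=set0 ->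
  (forall L, A L -> left_ideal L /\ closed (L : set F)) ->
  (forall L L', A L -> A L' -> L `<=` L' \/ L' `<=` L) ->
  left_ideal (\bigcap_(L in A) L).
Proof.
move=> [L0 AL0] Aideal Atot; split.
- by move=> f /(_ L0 AL0); case: (Aideal L0 AL0) => -[+ _ _] _; apply.
- pose G := filter_from A (fun L => L : set F).
  have GF : Filter G.
    apply: filter_from_filter; first by exists L0.
    move=> L L' AL AL'; have [h|h] := Atot L L' AL AL'.
      by exists L => // f Lf; split => //; exact: h.
    by exists L' => // f L'f; split => //; exact: h.
  have GP : ProperFilter G.
    by apply: filter_from_proper => // L /Aideal[[_ + _] _].
  have GE : G E by exists L0 => //; case: (Aideal L0 AL0) => -[] .
  have [p [_ clp]] := ellis_compact _ GP GE.
  exists p => L AL; case: (Aideal L AL) => _; apply => B hB.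
  by apply: clp => //; exists L.
- move=> q l Eq Il L AL.
  by case: (Aideal L AL) => -[_ _ +] _; apply => //; exact: Il.
Qed.

Lemma minimal_left_ideal_exists : exists2 M, left_ideal M &
  forall N, left_ideal N -> N `<=` M -> M `<=` N.
Proof.
pose Lt := {L : set (X -> X) | left_ideal L /\ closed (L : set F)}.
have El : left_ideal E.
  split => //; first by exists id; exact: ellis_id.
  by move=> q l Eq El; exact: ellis_comp.
pose t0 : Lt := exist _ E (conj El ellis_closed).
pose Rl := fun a b : Lt => `[< proj1_sig b `<=` proj1_sig a >].
have [| | |t tmax] := @ZL_preorder Lt t0 Rl.
- by move=> a; apply/asboolP.
- by move=> a b c /asboolP h1 /asboolP h2; apply/asboolP; exact: subset_trans h2 h1.
- move=> A Atot.
  have [[a0 Aa0]|A0] := pselect (A !=set0); last first.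
    by exists t0 => s As; exfalso; apply: A0; exists s.
  pose B := [set proj1_sig a | a in A].
  have Bideal L : B L -> left_ideal L /\ closed (L : set F).
    by move=> [a _ <-]; exact: proj2_sig a.
  have Btot L L' : B L -> B L' -> L `<=` L' \/ L' `<=` L.
    move=> [a Aa <-] [b Ab <-].
    by have [/asboolP|/asboolP] := Atot a b Aa Ab; [right|left].
  have Icl : closed (\bigcap_(L in B) L : set F).
    by apply: closed_bigI => L /Bideal[].
  have Bne : B !=set0 by exists (proj1_sig a0), a0.
  have Il := left_ideal_chain_bigcap _ Bne Bideal Btot.
  exists (exist _ (\bigcap_(L in B) L) (conj Il Icl) : Lt).
  by move=> a Aa; apply/asboolP => /=; apply: bigcap_inf; exists a.
- exists (proj1_sig t); first by case: (proj2_sig t).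
  move=> N [NE [n Nn] Nl] NM.
  pose En := [set q \o n | q in E].
  pose N' : Lt := exist _ En (conj (left_ideal_ellis_rcomp _ (NE n Nn))
                                   (closed_ellis_rcomp n)).
  have N'N : En `<=` N by move=> _ [q Eq <-]; exact: Nl.
  have /asboolP h := tmax N' (asboolT (subset_trans N'N NM)).
  by move=> f /h /N'N.
Qed.

(* For a minimal left ideal M the two-sided ideal M E contains ker E, so
   e = m s with m in M; minimality of M forces the left ideal of those m' in M
   with m' s in E p e to be all of M. *)
Lemma ker_ellis_linv {e p : X -> X} : ker_ellis alpha e -> E p ->
  exists2 r, E r & forall x, r (p (e x)) = e x.
Proof.
move=> ke Ep.
have [M [ME [m0 Mm0] Ml] Mmin] := minimal_left_ideal_exists.
pose MxE := [set f | exists m s, [/\ M m, E s & f = m \o s]].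
have MxE_ideal : two_sided_ideal E MxE.
  split.
  - by move=> _ [m [s [Mm Es ->]]]; apply: ellis_comp => //; exact: ME.
  - by exists m0, m0, id; split => //; exact: ellis_id.
  - move=> q f Eq [m [s [Mm Es ->]]]; split.
      by exists (q \o m), s; split => //; exact: Ml.
    by exists m, (s \o q); split => //; exact: ellis_comp.
have [m [s [Mm Es he]]] := ke _ MxE_ideal.
pose N := [set m' | M m' /\ exists2 q, E q & m' \o s = q \o p \o e].
have Nl : left_ideal N.
  split.
  - by move=> f [/ME].
  - exists (p \o m); split; first exact: Ml.
    by exists id; [exact: ellis_id | rewrite he].
  - move=> q f Eq [Mf [q' Eq' hq']]; split; first exact: Ml.
    exists (q \o q'); first exact: ellis_comp.
    by apply: funext => x /=; exact: (congr1 (fun g => q (g x)) hq').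
have [_ [q Eq hq]] := Mmin N Nl (fun f (hf : N f) => proj1 hf) m Mm.
by exists q => // x; have := congr1 (@^~ x) (etrans he hq).
Qed.

Lemma ellis_two_sided_ideal : two_sided_ideal E E.
Proof.
split => //; first by exists id; exact: ellis_id.
by move=> p q Ep Eq; split; exact: ellis_comp.
Qed.

Lemma ker_ellis_sub {p} : ker_ellis alpha p -> E p.
Proof. by apply; exact: ellis_two_sided_ideal. Qed.

Lemma ker_ellis_lcomp {p q} : E p -> ker_ellis alpha q -> ker_ellis alpha (p \o q).
Proof. by move=> Ep kq I hI; case: (hI) => _ _ h; case: (h p q Ep (kq I hI)). Qed.

Lemma ker_ellis_rcomp {p q} : ker_ellis alpha q -> E p -> ker_ellis alpha (q \o p).
Proof. by move=> kq Ep I hI; case: (hI) => _ _ h; case: (h p q Ep (kq I hI)). Qed.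

Definition proximal_transitive_on (A : set X) :=
  forall x y z, A x -> A y -> A z ->
    proximal alpha x y -> proximal alpha y z -> proximal alpha x z.

Section StructureGroup.
Context {e : X -> X}.
Hypothesis eJ : Jmin alpha e.
Local Notation H := (structure_group alpha e).
Local Notation G := (little_structure_group alpha e).

Let ke : ker_ellis alpha e := proj1 eJ.
Let ee x : e (e x) = e x := congr1 (@^~ x) (proj2 eJ).

Lemma structure_group_of {p} : E p -> H (e \o p \o e).
Proof. by exists p. Qed.

Lemma structure_group_idl {g} : H g -> forall y, e (g y) = g y.
Proof. by move=> [p _ <-] y /=; rewrite ee. Qed.

Lemma structure_group_idr {g} : H g -> forall y, g (e y) = g y.
Proof. by move=> [p _ <-] y /=; rewrite ee. Qed.

Lemma structure_group_ellis {g} : H g -> E g.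
Proof.
have Ee := ker_ellis_sub ke.
by move=> [p Ep <-]; do 2!apply: ellis_comp => //.
Qed.

Lemma structure_group_comp {g1 g2} : H g1 -> H g2 -> H (g1 \o g2).
Proof.
have Ee := ker_ellis_sub ke.
move=> [p Ep <-] [q Eq <-]; exists (p \o e \o e \o q) => //.
by do 3!apply: ellis_comp => //.
Qed.

(* A left inverse that itself has a left inverse is a two-sided inverse. *)
Lemma structure_group_inv {g} : H g -> exists2 h, H h & g \o h = e /\ h \o g = e.
Proof.
have linv g' : H g' -> exists2 h, H h & forall z, h (g' z) = e z.
  move=> [p Ep <-].
  have [r Er hr] := ker_ellis_linv ke (ellis_comp (ker_ellis_sub ke) Ep).
  exists (e \o r \o e); first exact: structure_group_of.
  by move=> z /=; rewrite ee hr ee.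
move=> Hg; have [h Hh hg] := linv _ Hg; have [h' _ hh] := linv _ Hh.
exists h => //; split; apply: funext => z /=; last exact: hg.
by rewrite -(structure_group_idl Hg) -hh hg (structure_group_idl Hh).
Qed.

Lemma little_gen {p} : Jmin alpha p -> G (e \o p \o e).
Proof. by move=> Jp S _ h _ _; exact: h. Qed.

Lemma little_comp {g1 g2} : G g1 -> G g2 -> G (g1 \o g2).
Proof.
move=> G1 G2 S SH Sgen Scomp Sinv.
exact: Scomp (G1 S SH Sgen Scomp Sinv) (G2 S SH Sgen Scomp Sinv).
Qed.

Lemma little_inv {g h} : G g -> H h -> g \o h = e -> h \o g = e -> G h.
Proof.
move=> Gg Hh gh hg S SH Sgen Scomp Sinv.
exact: Sinv (Gg S SH Sgen Scomp Sinv) Hh gh hg.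
Qed.

Lemma little_sub {g} : G g -> H g.
Proof.
apply => //; last by move=> ? ?; exact: structure_group_comp.
by move=> p [kp _]; apply: structure_group_of; exact: ker_ellis_sub.
Qed.

Lemma little_id : G e.
Proof.
have eee : e \o e \o e = e by apply: funext => z /=; rewrite !ee.
by rewrite -{2}eee; exact: little_gen.
Qed.

Lemma little_ind (P : (X -> X) -> Prop) :
  (forall p, Jmin alpha p -> P (e \o p \o e)) ->
  (forall g1 g2, G g1 -> G g2 -> P g1 -> P g2 -> P (g1 \o g2)) ->
  (forall g h, G g -> G h -> g \o h = e -> h \o g = e -> P g -> P h) ->
  forall g, G g -> P g.
Proof.
move=> Pgen Pcomp Pinv g Gg; suff [] : G g /\ P g by [].
apply: (Gg (fun f => G f /\ P f))
  => [f [Gf _] | p Jp | g1 g2 [G1 P1] [G2 P2] | g1 h [G1 P1] Hh gh hg].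
- exact: little_sub.
- by split; [exact: little_gen | exact: Pgen].
- by split; [exact: little_comp | exact: Pcomp].
- by have Gh := little_inv G1 Hh gh hg; split => //; exact: (Pinv g1 h).
Qed.

Lemma proximal_range_eq x y : proximal alpha (e x) (e y) -> e x = e y.
Proof.
move=> /proximalP [p Ep pxy].
have [r _ hr] := ker_ellis_linv ke Ep.
by rewrite -(hr x) pxy hr.
Qed.

(* If [k] inverts [e p e] in [e E e], then [k e p] is a minimal idempotent. *)
Lemma Jmin_of_proximal x y :
  proximal alpha x y -> exists2 u, Jmin alpha u & u x = u y.
Proof.
move=> /proximalP [p Ep pxy].
have [k Hk [pk _]] := structure_group_inv (structure_group_of Ep).
exists (k \o e \o p); last by rewrite /= pxy.
split.
  exact: (ker_ellis_lcomp (structure_group_ellis Hk) (ker_ellis_rcomp ke Ep)).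
have kpk w : k (e (p (k w))) = k w.
  rewrite -[in LHS](structure_group_idl Hk w).
  by have /= -> := congr1 (@^~ w) pk; rewrite (structure_group_idr Hk).
by apply: funext => z /=; rewrite kpk.
Qed.

(* With [c := e u w] and [k] its inverse in [e E e], [v := w k u] is a minimal
   idempotent and [c (e v e) = e u e], so [c] is a product of generators of
   the little structure group and the inverse of one. *)
Lemma little_comp_Jmin u w : Jmin alpha u -> Jmin alpha w -> w \o e = w ->
  G (e \o u \o w).
Proof.
move=> uJ [kw ww] we.
have Eu := ker_ellis_sub (proj1 uJ); have Ew := ker_ellis_sub kw.
have weE z : w (e z) = w z := congr1 (@^~ z) we.
have wwE z : w (w z) = w z := congr1 (@^~ z) ww.
have Hc : H (e \o u \o w).
  by rewrite -[in X in H X]we; exact: structure_group_of (ellis_comp Eu Ew).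
have [k Hk [ck _]] := structure_group_inv Hc.
have ckE z : e (u (w (k z))) = e z := congr1 (@^~ z) ck.
have kuwk z : k (u (w (k z))) = k z.
  by rewrite -(structure_group_idr Hk (u _)) ckE (structure_group_idr Hk).
pose v := w \o k \o u.
have vJ : Jmin alpha v.
  split; first exact: ker_ellis_rcomp kw (ellis_comp (structure_group_ellis Hk) Eu).
  by apply: funext => z; rewrite /v /= kuwk.
have [j Hj [vj jv]] :=
  structure_group_inv (structure_group_of (ker_ellis_sub (proj1 vJ))).
have cv : (e \o u \o w) \o (e \o v \o e) = e \o u \o e.
  by apply: funext => z; rewrite /v /= weE wwE ckE.
suff -> : e \o u \o w = (e \o u \o e) \o j.
  exact: little_comp (little_gen uJ) (little_inv (little_gen vJ) Hj vj jv).
rewrite -cv; apply: funext => z /=.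
by have /= -> := congr1 (@^~ z) vj; rewrite weE.
Qed.

(* Write [x = a (e x)] and factor [a e = w (e a e)] with the minimal
   idempotent [w := a e h], [h] inverting [e a e]; then [c := e u w]. *)
Lemma minimal_little_orbit {u} x : minimal_system alpha -> Jmin alpha u ->
  exists2 c, G c & e (u x) = c (e x).
Proof.
move=> hmin uJ.
have [a Ea ax] := minimal_ellis_onto hmin (e x) x.
have [h Hh [_ hg]] := structure_group_inv (structure_group_of Ea).
have hgE z : h (e (a (e z))) = e z := congr1 (@^~ z) hg.
have haE z : h (a (e z)) = e z by rewrite -(structure_group_idr Hh) hgE.
pose w := a \o e \o h.
have we : w \o e = w by apply: funext => z; rewrite /w /= (structure_group_idr Hh).
have wJ : Jmin alpha w.
  split; first exact: ker_ellis_lcomp Ea (ker_ellis_rcomp ke (structure_group_ellis Hh)).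
  by apply: funext => z; rewrite /w /= haE ee.
exists (e \o u \o w); first exact: little_comp_Jmin.
by rewrite /w /= -[in RHS]ax hgE ee ax.
Qed.

Lemma fiber_transitive_of_little_fix (A : set X) : minimal_system alpha ->
  (forall g, G g -> forall x, A x -> g (e x) = e x) -> proximal_transitive_on A.
Proof.
move=> hmin Gfix.
have proximal_e x y : A x -> A y -> proximal alpha x y -> e x = e y.
  move=> fx fy /Jmin_of_proximal [u uJ uxy].
  have [c Gc cx] := minimal_little_orbit x hmin uJ.
  have [d Gd dy] := minimal_little_orbit y hmin uJ.
  by rewrite -(Gfix c Gc x fx) -cx uxy dy Gfix.
move=> x y z fx fy fz pxy pyz; apply/proximalP.
exists e; first exact: ker_ellis_sub ke.
by rewrite (proximal_e x y) ?(proximal_e y z).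
Qed.

Section EquicontinuousFactor.
Context {Y : pseudoMetricType R} {beta : T -> Y -> Y} (pi : X -> Y).
Hypotheses (Ysep : hausdorff_space Y) (Yact : tds_action beta)
  (Yequi : equicontinuous_system beta) (pifac : factor_map alpha beta pi).

Lemma equicontinuous_factor_proximal_eq {x y} : proximal alpha x y -> pi x = pi y.
Proof.
case: Yact pifac => b1 bM _ [pic _ piE] /proximalP [p Ep pxy].
apply: hausdorff_ball_eq => // eps e0.
have [d d0 hd] := Yequi eps e0.
have d2 : 0 < d / 2 by rewrite divr_gt0.
have N : nbhs (p : F) ([set f : F | ball (pi (p x)) (d/2) (pi (f x))] `&`
                       [set f : F | ball (pi (p y)) (d/2) (pi (f y))]).
  by apply: filterI; apply: nbhs_ptws_eval => //; exact: nbhsx_ballx.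
have [_ [[t ->] [h1 h2]]] := Ep _ N.
have hb : ball (beta t (pi x)) d (beta t (pi y)).
  rewrite -!piE; apply: (@ball_splitl _ _ (pi (p x))); first exact: ball_sym.
  by rewrite pxy; exact: ball_sym.
by have := hd _ _ (t^-1)%g hb; rewrite -!bM mulVg !b1.
Qed.

Lemma factor_Jmin {u} z : Jmin alpha u -> pi (u z) = pi z.
Proof.
move=> [ku uu]; apply: equicontinuous_factor_proximal_eq; apply/proximalP.
by exists u; [exact: ker_ellis_sub | exact: (congr1 (@^~ z) uu)].
Qed.

Lemma little_factor {g} : G g -> forall z, pi (g z) = pi z.
Proof.
apply: (little_ind (fun f => forall z, pi (f z) = pi z))
  => [p pJ z | g1 g2 _ _ P1 P2 z | g1 h _ _ gh _ Pg z] /=.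
- by rewrite (factor_Jmin _ eJ) (factor_Jmin _ pJ) (factor_Jmin _ eJ).
- by rewrite P1 P2.
- by rewrite -Pg; have /= -> := congr1 (@^~ z) gh; rewrite (factor_Jmin _ eJ).
Qed.

Lemma little_fiber_proximal xi :
  proximal_transitive_on [set x | pi x = xi] ->
  forall g, G g -> forall x, pi x = xi -> proximal alpha (e x) (g (e x)).
Proof.
move=> htr; have piE x : pi (e x) = pi x := factor_Jmin x eJ.
apply: (little_ind (fun f => forall x, pi x = xi -> proximal alpha (e x) (f (e x))))
  => [p pJ | g1 g2 G1 G2 P1 P2 | g1 h _ Gh gh _ Pg] x px.
- have pexE : pi (p (e x)) = xi by rewrite factor_Jmin // piE.
  have ppE z : p (p z) = p z := congr1 (@^~ z) (proj2 pJ).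
  apply: (htr _ (p (e x))); rewrite /= ?ee ?piE ?pexE //; apply/proximalP.
    by exists p; [exact: ker_ellis_sub (proj1 pJ) | rewrite ppE].
  by exists e; [exact: ker_ellis_sub ke | rewrite ee].
- have py : pi (g2 (e x)) = xi by rewrite (little_factor G2) piE.
  apply: (htr _ (g2 (e x))); rewrite /= ?(little_factor G1) ?piE //; first exact: P2.
  by have := P1 _ py; rewrite (structure_group_idl (little_sub G2)).
- have py : pi (h (e x)) = xi by rewrite (little_factor Gh) piE.
  have := Pg _ py; rewrite (structure_group_idl (little_sub Gh)).
  by have /= -> := congr1 (@^~ (e x)) gh; rewrite ee; exact: proximal_sym.
Qed.

Lemma little_fix_of_fiber_transitive xi :
  proximal_transitive_on [set x | pi x = xi] ->
  forall g, G g -> forall x, pi x = xi -> g (e x) = e x.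
Proof.
move=> htr g Gg x px; have gE := structure_group_idl (little_sub Gg).
rewrite -gE; apply: esym; apply: proximal_range_eq; rewrite gE.
exact: (little_fiber_proximal _ htr _ Gg _ px).
Qed.

Lemma fiber_proximal_transitiveP xi : minimal_system alpha ->
  proximal_transitive_on [set x | pi x = xi] <->
  (forall g, G g -> forall x, pi x = xi -> g (e x) = e x).
Proof.
move=> hmin; split; first exact: little_fix_of_fiber_transitive.
exact: fiber_transitive_of_little_fix.
Qed.

Lemma proximal_transitiveP : minimal_system alpha ->
  (forall x y z, proximal alpha x y -> proximal alpha y z -> proximal alpha x z) <->
  G = [set e].
Proof.
move=> hmin; split => [htr | Ge].
- apply/seteqP; split => [g Gg | _ ->]; last exact: little_id.
  apply/funext => x; rewrite -(structure_group_idr (little_sub Gg)).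
  have htr_fiber xi : proximal_transitive_on [set x | pi x = xi].
    by move=> a b c _ _ _; exact: htr.
  exact: (little_fix_of_fiber_transitive _ (htr_fiber (pi x)) _ Gg _ erefl).
- move=> x y z pxy pyz.
  apply: ((fiber_proximal_transitiveP (pi x) hmin).2 _ x y z) => //.
  + by move=> g; rewrite Ge => -> w _; rewrite ee.
  + exact/esym/equicontinuous_factor_proximal_eq.
  + rewrite (equicontinuous_factor_proximal_eq pxy).
    exact/esym/equicontinuous_factor_proximal_eq.
Qed.

End EquicontinuousFactor.

End StructureGroup.
End EllisSemigroup.

Theorem mainTheorem3 (R : realType) (T : groupType) (X : pseudoMetricType R)
  (alpha : T -> X -> X) (Xmax : pseudoMetricType R) (beta : T -> Xmax -> Xmax)
  (pi : X -> Xmax) (e : X -> X) (xi : Xmax) :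
  compact [set: X] -> hausdorff_space X ->
  tds_action alpha -> minimal_system alpha ->
  is_max_equicontinuous_factor alpha beta pi ->
  Jmin alpha e ->
  ((forall x y z, pi x = xi -> pi y = xi -> pi z = xi ->
      proximal alpha x y -> proximal alpha y z -> proximal alpha x z) <->
   (forall g, little_structure_group alpha e g ->
      forall x, pi x = xi -> g (e x) = e x))
  /\
  ((forall x y z, proximal alpha x y -> proximal alpha y z -> proximal alpha x z) <->
   little_structure_group alpha e = [set e]).
Proof.
move=> Xcpt Xsep Xact hmin [[_ Ysep Yact Yequi] pifac _] eJ.
split.
  exact: (fiber_proximal_transitiveP Xcpt Xsep Xact eJ pi Ysep Yact Yequi pifac xi hmin).
exact: (proximal_transitiveP Xcpt Xsep Xact eJ pi Ysep Yact Yequi pifac hmin).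
Qed.
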